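(* Consider the amortized variant of the algorithmic framework described below with parameters $\gamma\in(0,1)$, $\eta=\gamma^{-1}$ and $\xi=\gamma^{-1}+\tfrac13$. Then the framework maintains $\ell_i\le(1+\eta)T$ for every machine $i$, where $\ell_i=\sum_{j\in \hat J_i\cup\check J_i}p_j/s_i$ is the total load of machine $i$ and $T$ is the current guess.
   Context: Problem: machines $1,\dots,m$ with speeds $s_1\ge s_2\ge\dots\ge s_m>0$; jobs arrive online, job $j$ has size $p_j>0$; the load of job $j$ on machine $i$ is $p_j/s_i$. Framework (amortized variant): it keeps a guess $T$, for each machine $i$ a partition of its jobs into old jobs $\hat J_i$ and new jobs $\check J_i$, and a potential $\pi_i$ per machine. Machine $i$ is saturated if $\check\ell_i:=\sum_{j\in\check J_i}p_j/s_i\ge T$, and $\eta$-eligible for job $j$ if $p_j/s_i\le \eta T$. Let $\tilde{\mathcal M}(\eta,j)$ be the set of machines that are $\eta$-eligible for $j$ and not saturated. When the first job $j_1$ arrives, set $T=p_{j_1}/s_1$ and place $j_1$ on machine 1. When a later job $j^*$ arrives, put it into a priority queue $Q$ (larger size = higher priority) and run: while $Q$ is nonempty, remove the largest job $j'$ from $Q$; then repeat: if $\tilde{\mathcal M}(\eta,j')\ne\emptyset$, choose a slowest machine $i'$ in it, move every $j\in\hat J_{i'}$ with $p_j\ge \eta^{-1}p_{j'}$ from $\hat J_{i'}$ to $\check J_{i'}$, and if $i'$ is still not saturated stop repeating; otherwise set $T:=\xi T$ and for every machine $i$ move all jobs of $\check J_i$ to $\hat J_i$ and set $\pi_i=0$.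 After a machine $i'$ is found, set $\pi:=\gamma p_{j'}+\pi_{i'}$; go through the jobs $j\in\hat J_{i'}$ in non-increasing order of size and, whenever $p_j\le\pi$, set $\pi:=\pi-p_j$ and move $j$ from $\hat J_{i'}$ into $Q$ (removing it from $i'$). Finally add $j'$ to $\check J_{i'}$ and set $\pi_{i'}:=\pi$. *)

(* Model of the amortized framework as a nondeterministic
   transition system (ties in the priority queue, in "slowest machine" and
   in the non-increasing scan order are resolved arbitrarily). *)
From HB Require Import structures.
From mathcomp Require Import all_boot all_order all_algebra.
Set Implicit Arguments. Unset Strict Implicit. Unset Printing Implicit Defensive.
Import Order.TTheory GRing.Theory Num.Theory.
Local Open Scope ring_scope.

Section Framework.
Variables (R : realFieldType) (m : nat).
(* machines are 'I_m.+1 (ord0 = machine 1), speeds s, jobs are nat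
   (job k is the (k+1)-th arriving job) with sizes p *)
Variables (s : 'I_m.+1 -> R) (p : nat -> R) (gamma eta xi : R).

Record state := State {
  guess : R;
  old_jobs : 'I_m.+1 -> seq nat;   (* \hat J_i *)
  new_jobs : 'I_m.+1 -> seq nat;   (* \check J_i *)
  pot : 'I_m.+1 -> R;
  queue : seq nat;
  cur : option nat;                (* job j' currently being placed *)
  next_job : nat                   (* number of jobs arrived so far *)
}.

Definition new_load (st : state) (i : 'I_m.+1) : R :=
  \sum_(j <- new_jobs st i) p j / s i.

Definition load (st : state) (i : 'I_m.+1) : R :=
  \sum_(j <- old_jobs st i ++ new_jobs st i) p j / s i.

Definition saturated (st : state) (i : 'I_m.+1) : bool := guess st <= new_load st i.

Definition eligible (st : state) (i : 'I_m.+1) (j : nat) : bool :=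
  p j / s i <= eta * guess st.

Definition cand (st : state) (j : nat) (i : 'I_m.+1) : bool :=
  eligible st i j && ~~ saturated st i.

Fixpoint scan (pi : R) (l : seq nat) : R * seq nat :=
  match l with
  | [::] => (pi, [::])
  | k :: l' =>
      if p k <= pi then let r := scan (pi - p k) l' in (r.1, k :: r.2)
      else scan pi l'
  end.

Definition upd {T : Type} (f : 'I_m.+1 -> T) (i : 'I_m.+1) (x : T) :=
  fun k => if k == i then x else f k.

Definition init_state : state :=
  State (p 0%N / s ord0) (fun _ => [::])
        (fun i => if i == ord0 then [:: 0%N] else [::])
        (fun _ => 0) [::] None 1.

Inductive step : state -> state -> Prop :=
| step_arrive T hJ cJ pi n :
    step (State T hJ cJ pi [::] None n) (State T hJ cJ pi [:: n] None n.+1)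
| step_pop T hJ cJ pi Q n j :
    j \in Q -> (forall k, k \in Q -> p k <= p j) ->
    step (State T hJ cJ pi Q None n) (State T hJ cJ pi (rem j Q) (Some j) n)
| step_raise T hJ cJ pi Q n j :
    (forall i, ~~ cand (State T hJ cJ pi Q (Some j) n) j i) ->
    step (State T hJ cJ pi Q (Some j) n)
         (State (xi * T) (fun i => hJ i ++ cJ i) (fun _ => [::]) (fun _ => 0)
                Q (Some j) n)
| step_try_saturated T hJ cJ pi Q n j i :
    let st := State T hJ cJ pi Q (Some j) n in
    cand st j i -> (forall i2, cand st j i2 -> s i <= s i2) ->
    let hJ' := upd hJ i [seq k <- hJ i | ~~ (eta^-1 * p j <= p k)] in
    let cJ' := upd cJ i (cJ i ++ [seq k <- hJ i | eta^-1 * p j <= p k]) in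
    saturated (State T hJ' cJ' pi Q (Some j) n) i ->
    step st (State T hJ' cJ' pi Q (Some j) n)
| step_assign T hJ cJ pi Q n j i sc :
    let st := State T hJ cJ pi Q (Some j) n in
    cand st j i -> (forall i2, cand st j i2 -> s i <= s i2) ->
    let hJ' := upd hJ i [seq k <- hJ i | ~~ (eta^-1 * p j <= p k)] in
    let cJ' := upd cJ i (cJ i ++ [seq k <- hJ i | eta^-1 * p j <= p k]) in
    ~~ saturated (State T hJ' cJ' pi Q (Some j) n) i ->
    perm_eq sc (hJ' i) -> sorted (fun a b => p b <= p a) sc ->
    let r := scan (gamma * p j + pi i) sc in
    step st (State T (upd hJ' i [seq k <- hJ' i | k \notin r.2])
                   (upd cJ' i (cJ' i ++ [:: j])) (upd pi i r.1)
                   (Q ++ r.2) None n).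

Inductive reachable : state -> Prop :=
| reach_init : reachable init_state
| reach_step st st' : reachable st -> step st st' -> reachable st'.

End Framework.

From mathcomp Require Import all_boot all_order all_algebra.
From mathcomp Require Import ring lra.
Set Implicit Arguments. Unset Strict Implicit. Unset Printing Implicit Defensive.
Import Order.TTheory GRing.Theory Num.Theory.
Local Open Scope ring_scope.

(* A job assigned to a
   machine contributes a (1 - gamma) share of its size to the load and a gamma
   share to the potential, which is spent on evicting old jobs; thus old plus
   new size, minus (1 - gamma) times the size assigned since the last raise,
   minus the potential, stays below kappa T s_i.  Raising T by xi makes every
   job old and turns the load bound (1 + 1/gamma) T into kappa times the new
   guess.  The eviction scan takes the largest old jobs first, so every
   surviving old job is at most the evicted size and exceeds the leftover
   potential.  For the first assignment after a raise this bounds the leftover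
   by gamma p_j / 2; for later ones it bounds every surviving old job by half
   of the slack kappa T s_i minus the old size.  Together with eligibility
   (p_j <= T s_i / gamma) and non-saturation (new size < T s_i) either bound
   gives the load bound. *)

Definition kappa (R : realFieldType) (g : R) : R := (1 + g^-1) / (g^-1 + 3^-1).

Lemma kappa_xi (R : realFieldType) (g : R) :
  0 < g -> kappa g * (g^-1 + 3^-1) = 1 + g^-1.
Proof.
move=> g0; have u0 : 0 < g^-1 by rewrite invr_gt0.
by rewrite /kappa divfK // lt0r_neq0 //; lra.
Qed.

Lemma kappa_bounds (R : realFieldType) (g : R) :
  0 < g -> g < 1 -> 1 <= kappa g <= 3 / 2.
Proof.
move=> g0 g1; have u1 : 1 < g^-1 by rewrite invf_gt1.
have xi0 : 0 < g^-1 + 3^-1 by lra.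
by rewrite /kappa ler_pdivlMr // ler_pdivrMr //; apply/andP; split; lra.
Qed.

Lemma load_bound_first (R : realFieldType) (g c P r L : R) :
  0 < g -> g < 1 -> 0 < c -> 0 <= P -> P <= g^-1 * c -> 2 * r <= g * P ->
  L <= kappa g * c + (1 - g) * P + r -> L <= (1 + g^-1) * c.
Proof.
move=> g0 g1 c0 P0 Pc rP hL.
have /andP[_ k32] := kappa_bounds g0 g1.
have hk : kappa g * c <= 3 / 2 * c by rewrite ler_pM2r.
have hP : 0 <= (1 - g / 2) * (g^-1 * c - P) by apply: mulr_ge0; lra.
have e : (1 - g / 2) * (g^-1 * c) = g^-1 * c - c / 2 by field; lra.
lra.
Qed.

Lemma load_bound_later (R : realFieldType) (g C O N r : R) :
  0 < g -> g < 1 -> g * N <= C - O + r -> r <= O -> 2 * r <= C - O ->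
  O + N <= (g^-1 + 3^-1) * C.
Proof.
move=> g0 g1 hN rO rC; have u1 : 1 < g^-1 by rewrite invf_gt1.
have {}hN : N <= g^-1 * (C - O + r).
  by rewrite -(ler_pM2l g0) mulrA mulfV ?mul1r //; lra.
have [OC|OC] := lerP O (C / 3).
  have : g^-1 * r <= g^-1 * O by rewrite ler_pM2l //; lra.
  lra.
have : g^-1 * (2 * r) <= g^-1 * (C - O) by rewrite ler_pM2l //; lra.
have : 0 <= (3 / 2 * g^-1 - 1) * (O - C / 3) by apply: mulr_ge0; lra.
lra.
Qed.

Section Weight.
Variables (R : realFieldType) (p : nat -> R).
Hypothesis p_gt0 : forall j, 0 < p j.

Definition weight (l : seq nat) : R := \sum_(j <- l) p j.

Lemma weight_nil : weight [::] = 0.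
Proof. exact: big_nil. Qed.

Lemma weight_cons (x : nat) (l : seq nat) : weight (x :: l) = p x + weight l.
Proof. exact: big_cons. Qed.

Lemma weight_cat (l1 l2 : seq nat) : weight (l1 ++ l2) = weight l1 + weight l2.
Proof. exact: big_cat. Qed.

Lemma weight_perm (l1 l2 : seq nat) : perm_eq l1 l2 -> weight l1 = weight l2.
Proof. exact: perm_big. Qed.

Lemma weight_filterC (a : pred nat) (l : seq nat) :
  weight l = weight [seq x <- l | a x] + weight [seq x <- l | ~~ a x].
Proof. by rewrite /weight !big_filter [LHS](bigID a). Qed.

Lemma weight_ge0 (l : seq nat) : 0 <= weight l.
Proof. by apply: sumr_ge0 => j _; apply: ltW. Qed.

Lemma le_weight (x : nat) (l : seq nat) : x \in l -> p x <= weight l.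
Proof. by move=> xl; rewrite /weight (big_rem x) //= lerDl weight_ge0. Qed.

Lemma weight_subseq (l1 l2 : seq nat) : subseq l1 l2 -> weight l1 <= weight l2.
Proof.
elim: l2 l1 => [|y l2 IH] [|x l1] //=; rewrite ?weight_nil ?weight_ge0 //.
rewrite [weight (y :: _)]weight_cons.
case: eqP => [-> /IH|_ /IH]; first by rewrite weight_cons lerD2l.
by move/le_trans; apply; rewrite lerDr ltW.
Qed.

Lemma weight_filter_notin (s l' l : seq nat) :
  subseq s l' -> perm_eq l' l -> weight s + weight [seq x <- l | x \notin s] <= weight l.
Proof.
move=> sub_s perm_l; rewrite [leRHS](weight_filterC (mem s)) lerD2r.
rewrite -(weight_perm (perm_filter _ perm_l)); apply: weight_subseq.
by rewrite subseq_filter sub_s andbT; apply/allP.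
Qed.

Lemma sum_div_weight (x : R) (l : seq nat) : \sum_(j <- l) p j / x = weight l / x.
Proof. by rewrite /weight mulr_suml. Qed.

Lemma scan_weight (pi : R) (l : seq nat) : (scan p pi l).1 + weight (scan p pi l).2 = pi.
Proof.
elim: l pi => [|x l IH] pi /=; first by rewrite weight_nil addr0.
case: ifP => _ //=; rewrite weight_cons addrCA IH; ring.
Qed.

Lemma scan_rest_le (pi : R) (l : seq nat) : (scan p pi l).1 <= pi.
Proof. by rewrite -{2}(scan_weight pi l) lerDl weight_ge0. Qed.

Lemma scan_rest_ge0 (pi : R) (l : seq nat) : 0 <= pi -> 0 <= (scan p pi l).1.
Proof.
elim: l pi => [|x l IH] pi //= pi0.
by case: ifP => [px|_]; apply: IH; rewrite ?subr_ge0.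
Qed.

Lemma scan_subseq (pi : R) (l : seq nat) : subseq (scan p pi l).2 l.
Proof.
elim: l pi => [|y l IH] pi //=.
case: ifP => _ /=; first by rewrite eqxx IH.
exact: subseq_trans (IH pi) (subseq_cons l y).
Qed.

Lemma scan_rest_lt_skipped (pi : R) (l : seq nat) (x : nat) :
  x \in l -> x \notin (scan p pi l).2 -> (scan p pi l).1 < p x.
Proof.
elim: l pi => [|y l IH] pi //=; rewrite inE.
case: ifP => [py|/negbT]; rewrite /= ?inE.
  by case/orP=> [/eqP ->|xl]; rewrite ?eqxx // negb_or => /andP[_]; apply: IH.
rewrite -ltNge => ypi /orP[/eqP -> _|xl]; last exact: IH.
exact: le_lt_trans (scan_rest_le _ _) ypi.
Qed.

Lemma scan_sorted_skipped_le (pi : R) (l : seq nat) (x : nat) :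
  sorted (fun a b => p b <= p a) l -> {in l, forall y, p y <= pi} ->
  x \in l -> x \notin (scan p pi l).2 -> p x <= weight (scan p pi l).2.
Proof.
case: l => [|y l] //= sorted_yl fits; have ypi := fits y (mem_head y l).
rewrite /= ypi /= !inE negb_or weight_cons.
case/orP=> [/eqP ->|xl]; first by rewrite eqxx.
have le_x_y : p x <= p y.
  have le_trans' : transitive (fun a b => p b <= p a).
    by move=> b a c /= ab bc; apply: le_trans ab.
  exact: allP (order_path_min le_trans' sorted_yl) x xl.
by move=> _; apply: le_trans le_x_y _; rewrite lerDl weight_ge0.
Qed.

Lemma scan_evict (pi : R) (O sc : seq nat) (rest : R) (taken : seq nat) :
  perm_eq sc O -> sorted (fun a b => p b <= p a) sc ->
  {in O, forall y, p y <= pi} -> 0 <= pi -> scan p pi sc = (rest, taken) ->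
  [/\ rest + weight taken = pi, 0 <= rest,
      weight taken + weight [seq x <- O | x \notin taken] <= weight O &
      forall x, x \in [seq x <- O | x \notin taken] -> rest < p x <= weight taken].
Proof.
move=> perm_sc sorted_sc fits pi0 scan_eq.
have fits_sc : {in sc, forall y, p y <= pi} by move=> y; rewrite (perm_mem perm_sc); apply: fits.
rewrite -[rest]/(rest, taken).1 -[taken]/(rest, taken).2 -scan_eq.
split; rewrite ?scan_weight ?scan_rest_ge0 //.
  exact: weight_filter_notin (scan_subseq pi sc) perm_sc.
move=> x; rewrite mem_filter -(perm_mem perm_sc) => /andP[xr xO].
by rewrite scan_rest_lt_skipped ?scan_sorted_skipped_le.
Qed.

End Weight.

Section MachineInvariant.
Variables (R : realFieldType) (p : nat -> R) (g : R).
Hypothesis p_gt0 : forall j, 0 < p j.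

(* c is the guess times the speed of the machine, A the total size of the jobs
   assigned to it since the last raise of the guess. *)
Record machine_inv (c : R) (O N : seq nat) (pi A : R) : Prop := MachineInv {
  accounting : weight p O + weight p N - (1 - g) * A - pi <= kappa g * c;
  pot_ge0 : 0 <= pi;
  pot_le_assigned : pi <= g * A;
  assigned_le_new : A <= weight p N;
  pot_lt_old : forall x, x \in O -> pi < p x;
  load_le : weight p O + weight p N <= (1 + g^-1) * c;
  old_le_slack : 0 < A -> forall x, x \in O -> p x <= kappa g * c - weight p O }.

Lemma machine_inv_old_le (c : R) (O N : seq nat) (pi A : R) :
  machine_inv c O N pi A -> weight p O <= kappa g * c.
Proof. by case=> acc _ pi_le A_le _ _ _; lra. Qed.

Lemma machine_inv_init (c : R) (N : seq nat) :
  0 < g -> g < 1 -> 0 <= c -> weight p N <= c -> machine_inv c [::] N 0 0.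
Proof.
move=> g0 g1 c0 Nc; have /andP[k1 _] := kappa_bounds g0 g1.
have u1 : 1 < g^-1 by rewrite invf_gt1.
have c_le_kc : c <= kappa g * c by rewrite ler_peMl.
have c_le_Ec : c <= (1 + g^-1) * c by rewrite ler_peMl //; lra.
have N0 := weight_ge0 p_gt0 N.
by split; rewrite ?weight_nil // ?mulr0; lra.
Qed.

Lemma machine_inv_raise (c : R) (O N : seq nat) (pi A : R) :
  0 < g -> g < 1 -> 0 <= c -> machine_inv c O N pi A ->
  machine_inv ((g^-1 + 3^-1) * c) (O ++ N) [::] 0 0.
Proof.
move=> g0 g1 c0 [_ _ _ _ _ load _]; have u1 : 1 < g^-1 by rewrite invf_gt1.
have E0 : 0 <= (1 + g^-1) * c by apply: mulr_ge0; lra.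
have E_le : (1 + g^-1) * c <= (1 + g^-1) * ((g^-1 + 3^-1) * c).
  by rewrite mulrCA ler_peMl //; lra.
split; rewrite ?weight_nil ?weight_cat ?mulrA ?kappa_xi // ?mulr0; try lra.
Qed.

Lemma machine_inv_move (a : pred nat) (c : R) (O N : seq nat) (pi A : R) :
  machine_inv c O N pi A ->
  machine_inv c [seq x <- O | ~~ a x] (N ++ [seq x <- O | a x]) pi A.
Proof.
move=> [acc pi0 pi_le A_le pi_lt load slack].
have splitO := weight_filterC p a O.
have moved0 := weight_ge0 p_gt0 [seq x <- O | a x].
split; rewrite ?weight_cat //; try lra.
- by move=> x; rewrite mem_filter => /andP[_ /pi_lt].
- by move=> A0 x; rewrite mem_filter => /andP[_ /(slack A0)]; lra.
Qed.

Lemma machine_inv_assign (c : R) (O N : seq nat) (pi A : R) (j : nat) (sc : seq nat)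
    (rest : R) (taken : seq nat) :
  0 < g -> g < 1 -> 0 < c -> machine_inv c O N pi A ->
  (forall x, x \in O -> p x < g * p j) -> weight p N < c -> p j <= g^-1 * c ->
  perm_eq sc O -> sorted (fun a b => p b <= p a) sc ->
  scan p (g * p j + pi) sc = (rest, taken) ->
  machine_inv c [seq x <- O | x \notin taken] (N ++ [:: j]) rest (A + p j).
Proof.
move=> g0 g1 c0 inv small_O unsat elig perm_sc sorted_sc scan_eq.
have old_le := machine_inv_old_le inv.
case: inv => acc pi0 pi_le A_le pi_lt load slack.
have P0 := p_gt0 j; have gP0 := mulr_gt0 g0 P0.
have A0 : 0 <= A by rewrite -(pmulr_rge0 _ g0); apply: le_trans pi_le.
have fits : {in O, forall y, p y <= g * p j + pi} by move=> y /small_O; lra.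
have [|rest_sum rest0 removed kept] := scan_evict p_gt0 perm_sc sorted_sc fits _ scan_eq.
  lra.
set O' := [seq x <- O | x \notin taken] in removed kept *.
have taken0 := weight_ge0 p_gt0 taken.
have weight_N' : weight p (N ++ [:: j]) = weight p N + p j.
  by rewrite weight_cat weight_cons weight_nil addr0.
split; rewrite ?weight_N' //; try lra.
- by move=> x /kept /andP[].
- case kept_eq: O' => [|x l]; first by rewrite weight_nil; lra.
  have x_kept : x \in O' by rewrite kept_eq mem_head.
  rewrite -kept_eq; have /andP[rest_lt x_taken] := kept x x_kept.
  have x_kept_le := le_weight p_gt0 x_kept.
  move: A0; rewrite le_eqVlt => /predU1P[A_eq0|A_pos].
    move: pi_le acc; rewrite -A_eq0 mulr0 => pi_le acc.
    by apply: (load_bound_first (r := rest) g0 g1 c0 (ltW P0) elig); lra.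
  have xO : x \in O by move: x_kept; rewrite mem_filter => /andP[].
  have x_slack := slack A_pos x xO.
  have share_le : (1 - g) * (A + p j) <= (1 - g) * (weight p N + p j).
    by rewrite ler_wpM2l ?lerD2r // subr_ge0 ltW.
  apply: le_trans (load_bound_later (C := kappa g * c) (r := rest) g0 g1 _ _ _) _;
    try lra.
  by rewrite mulrA [_ * kappa g]mulrC kappa_xi.
- by move=> _ x /[dup] /kept /andP[_ x_taken] /(le_weight p_gt0); lra.
Qed.

End MachineInvariant.

Section Framework.
Variables (R : realFieldType) (m : nat) (s : 'I_m.+1 -> R) (p : nat -> R) (g : R).
Hypotheses (s_gt0 : forall i, 0 < s i) (p_gt0 : forall j, 0 < p j).
Hypotheses (g_gt0 : 0 < g) (g_lt1 : g < 1).

Definition framework_inv (st : state R m) : Prop :=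
  0 < guess st /\ forall i, exists A,
    machine_inv p g (guess st * s i) (old_jobs st i) (new_jobs st i) (pot st i) A.

Lemma framework_inv_init : framework_inv (init_state s p).
Proof.
have T0 : 0 < p 0%N / s ord0 by rewrite divr_gt0.
split => // i; exists 0; apply: machine_inv_init => //=.
- exact/ltW/mulr_gt0.
- case: eqP => [->|_]; last by rewrite weight_nil; apply/ltW/mulr_gt0.
  by rewrite weight_cons weight_nil addr0 divfK ?lt0r_neq0.
Qed.

Lemma framework_inv_step (st st' : state R m) :
  framework_inv st -> step s p g g^-1 (g^-1 + 3^-1) st st' -> framework_inv st'.
Proof.
move=> inv st_st'; case: st_st' inv => //.
- move=> T hJ cJ pi Q n j _ [/= T0 inv]; split => /= [|i].
    by rewrite mulr_gt0 // ltr_wpDr ?invr_ge0 ?ler0n ?invr_gt0.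
  have [A inv_i] := inv i; exists 0; rewrite -mulrA.
  by have := machine_inv_raise p_gt0 g_gt0 g_lt1 (ltW (mulr_gt0 T0 (s_gt0 i))) inv_i.
- move=> T hJ cJ pi Q n j i st0 _ _ hJ' cJ' _ [/= T0 inv]; split => //= i2.
  rewrite /hJ' /cJ' /upd; case: eqP => [->|_]; last exact: inv.
  by have [A inv_i] := inv i; exists A; apply: machine_inv_move.
- move=> T hJ cJ pi Q n j i sc st0 cand_i _ hJ' cJ' unsat perm_sc sorted_sc r [/= T0 inv].
  split => //= i2; rewrite /r /hJ' /cJ' /upd; case: eqP => [->|_]; last exact: inv.
  move: cand_i unsat perm_sc; rewrite /cand /eligible /saturated /new_load /= /cJ' /hJ' /upd eqxx.
  rewrite invrK !sum_div_weight ler_pdivrMr // => /andP[elig _] unsat perm_sc.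
  rewrite -ltNge ltr_pdivrMr // in unsat.
  have [A inv_i] := inv i; exists (A + p j).
  have small_O x : x \in [seq k <- hJ i | ~~ (g * p j <= p k)] -> p x < g * p j.
    by rewrite mem_filter ltNge => /andP[].
  rewrite -mulrA in elig.
  by have := machine_inv_assign p_gt0 g_gt0 g_lt1 (mulr_gt0 T0 (s_gt0 i))
    (machine_inv_move p_gt0 _ inv_i) small_O unsat elig perm_sc sorted_sc
    (surjective_pairing _).
Qed.

Lemma framework_inv_reachable (st : state R m) :
  reachable s p g g^-1 (g^-1 + 3^-1) st -> framework_inv st.
Proof.
elim=> [|st1 st2 _ inv1 st1_st2]; first exact: framework_inv_init.
exact: framework_inv_step inv1 st1_st2.
Qed.

End Framework.

Theorem lemma8 (R : realFieldType) (m : nat) (s : 'I_m.+1 -> R) (p : nat -> R)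
  (gamma : R) :
  (forall i, 0 < s i) ->
  (forall i j : 'I_m.+1, (i <= j)%N -> s j <= s i) ->
  (forall j, 0 < p j) ->
  0 < gamma -> gamma < 1 ->
  forall st : state R m,
    reachable s p gamma gamma^-1 (gamma^-1 + 3^-1) st ->
    forall i : 'I_m.+1,
      load s p st i <= (1 + gamma^-1) * guess st.
Proof.
(* The order of the speeds. *)
move=> s_gt0 _ p_gt0 g0 g1 st reach i.
have [T0 inv] := framework_inv_reachable s_gt0 p_gt0 g0 g1 reach.
have [A inv_i] := inv i.
by rewrite /load sum_div_weight ler_pdivrMr // weight_cat -mulrA (load_le inv_i).
Qed.
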